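(* Let $p,q$ be integers with $2\le q<p$, and let $\tau:\Sigma_q^\ast\to\{-1,0,\ldots,p-2\}$ be a regular mapping. Then for every $m\in\mathbb Z$ and every $k\in\mathbb N$, \[ \#\big(\Lambda(\tau)\cap[m,m+p^k)\big)\le q^k. \]
   Context: Let $\Sigma_q=\{0,1,\ldots,q-1\}$, $\Sigma_q^n$ the words of length $n$, and $\Sigma_q^\ast=\bigcup_{n\ge1}\Sigma_q^n$. A map $\tau:\Sigma_q^\ast\to\{-1,0,\ldots,p-2\}$ is a regular mapping if (i) $\tau(0^n)=0$ for all $n\ge1$; (ii) $\tau(i_1\cdots i_n)\in i_n+q\mathbb Z$ for every word $i_1\cdots i_n$; (iii) for every $I\in\Sigma_q^\ast$, $\tau(I0^l)=0$ for all sufficiently large $l$. For $I=i_1\cdots i_n\in\Sigma_q^\ast$ and $k\ge1$, let $I_{1,k}=i_1\cdots i_k$ if $k\le n$ and $I_{1,k}=i_1\cdots i_n0^{k-n}$ if $k>n$. Set $\tau^\ast(I)=\sum_{k=1}^\infty \tau(I_{1,k})p^{k-1}$ (a finite sum by (iii)), and $\Lambda(\tau)=\{\tau^\ast(I): I\in\Sigma_q^\ast\}$. *)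

From HB Require Import structures.
From mathcomp Require Import all_boot all_order all_algebra.
From mathcomp Require Import boolp.
Set Implicit Arguments. Unset Strict Implicit. Unset Printing Implicit Defensive.
Import Order.TTheory GRing.Theory Num.Theory.
Local Open Scope ring_scope.

(* Words over Sigma_q = {0,...,q-1} are represented as [seq nat] whose
   letters are all < q; Sigma_q^* consists of the nonempty such words. *)
Definition is_word (q : nat) (I : seq nat) : Prop :=
  (0 < size I)%N /\ all (fun i => (i < q)%N) I.

Definition prefix_pad (I : seq nat) (k : nat) : seq nat :=
  take k I ++ nseq (k - size I) 0%N.

Definition regular_mapping (p q : nat) (tau : seq nat -> int) : Prop :=
  (forall I, is_word q I -> -1 <= tau I <= (p%:Z - 2))
  /\ (forall n : nat, (1 <= n)%N -> tau (nseq n 0%N) = 0)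
  /\ (forall I, is_word q I -> (tau I = (last 0%N I)%:Z %[mod q%:Z])%Z)
  /\ (forall I, is_word q I ->
        exists L : nat, forall l : nat, (L <= l)%N -> tau (I ++ nseq l 0%N) = 0).

(* x = tau^*(I) = sum_{k>=1} tau(I_{1,k}) p^{k-1}: the series is a finite sum;
   [tau_star_is] says that all terms with index k > N vanish and x is the
   partial sum up to N (this value does not depend on such N). *)
Definition tau_star_is (p : nat) (tau : seq nat -> int) (I : seq nat) (x : int)
  : Prop :=
  exists N : nat,
    (forall k : nat, (N < k)%N -> tau (prefix_pad I k) = 0) /\
    x = \sum_(1 <= k < N.+1) tau (prefix_pad I k) * (p%:Z) ^+ (k.-1).

Definition Lambda (p q : nat) (tau : seq nat -> int) (x : int) : Prop :=
  exists I : seq nat, is_word q I /\ tau_star_is p tau I x.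

From HB Require Import structures.
From mathcomp Require Import all_boot all_order all_algebra.
From mathcomp Require Import boolp.
From mathcomp Require Import zify.
Set Implicit Arguments. Unset Strict Implicit. Unset Printing Implicit Defensive.
Import Order.TTheory GRing.Theory Num.Theory.
Local Open Scope ring_scope.

(* The terms of tau^*(I) of index > k are multiples of p^k, so tau^*(I) is
   congruent mod p^k to its k-th partial sum, which depends only on the first
   k letters of I.  Hence Lambda(tau) meets at most q^k residue classes mod
   p^k, and a window of length p^k contains at most one point of each class.
   None of the properties of a regular mapping is needed for this count. *)

Lemma size_prefix_pad I k : size (prefix_pad I k) = k.
Proof. by rewrite /prefix_pad size_cat size_take size_nseq; case: ltnP; lia. Qed.

Lemma nth_prefix_pad I k j : (j < k)%N -> nth 0%N (prefix_pad I k) j = nth 0%N I j.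
Proof.
move=> jk; rewrite /prefix_pad nth_cat size_take.
case: (ltnP k (size I)) => Hk; first by rewrite jk nth_take.
case: ltnP => Hj; first by rewrite nth_take.
by rewrite nth_nseq nth_default //; case: ifP.
Qed.

Lemma eq_prefix_pad I J k j : (j <= k)%N ->
  (forall i, (i < k)%N -> nth 0%N I i = nth 0%N J i) ->
  prefix_pad I j = prefix_pad J j.
Proof.
move=> jk eqIJ; apply: (@eq_from_nth _ 0%N); first by rewrite !size_prefix_pad.
by move=> i; rewrite size_prefix_pad => ij; rewrite !nth_prefix_pad // eqIJ //; lia.
Qed.

Section PartialSums.
Variables (d : int) (t : nat -> int).
Local Notation S n := (\sum_(1 <= j < n.+1) t j * d ^+ j.-1).

Lemma partial_sum_vanishing_tail N n :
  (forall j, (N < j)%N -> t j = 0) -> (N <= n)%N -> S n = S N.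
Proof.
move=> tail0 /subnK <-; elim: (n - N)%N => [|l IHl] //.
by rewrite addSn big_nat_recr //= tail0 ?mul0r ?addr0 //; lia.
Qed.

Lemma partial_sum_mod k n : (k <= n)%N -> (S n = S k %[mod d ^+ k])%Z.
Proof.
move=> kn; rewrite (big_cat_nat _ (n := k.+1)) //=.
rewrite -[X in (_ = X %[mod _])%Z]addr0; apply/eqP; rewrite eqz_modDl.
rewrite eqz_mod_dvd subr0 big_nat_cond.
apply: rpred_sum => j /andP [/andP [kj _] _].
by apply/dvdz_mull/dvdz_exp2l; lia.
Qed.

End PartialSums.

Lemma leq_card_bigcup (I T : finType) (P : {pred I}) (A : I -> {set T}) :
  (#|\bigcup_(i in P) A i| <= \sum_(i in P) #|A i|)%N.
Proof.
elim/big_ind2: _ => [|B b C c leBb leCc|//]; first by rewrite cards0.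
by apply: leq_trans (leq_card_setU _ _) _; apply: leq_add.
Qed.

Definition tau_partial (p : nat) (tau : seq nat -> int) (I : seq nat) (k : nat) : int :=
  \sum_(1 <= j < k.+1) tau (prefix_pad I j) * (p%:Z) ^+ j.-1.

Lemma eq_tau_partial p tau I J k :
  (forall i, (i < k)%N -> nth 0%N I i = nth 0%N J i) ->
  tau_partial p tau I k = tau_partial p tau J k.
Proof.
move=> eqIJ; apply: eq_big_nat => j /andP [_ jk].
by rewrite (@eq_prefix_pad I J k).
Qed.

Lemma tau_star_is_mod p tau I x k :
  tau_star_is p tau I x -> (x = tau_partial p tau I k %[mod (p%:Z) ^+ k])%Z.
Proof.
move=> [N [tail0 ->]]; rewrite /tau_partial.
rewrite -(partial_sum_vanishing_tail _ tail0 (leq_maxl N k)).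
exact: partial_sum_mod (leq_maxr N k).
Qed.

Lemma card_window_residue_le1 (d : nat) (m c : int) :
  (#|[set i : 'I_d | (m + (i : nat)%:Z == c %[mod d])%Z]| <= 1)%N.
Proof.
apply/card_le1_eqP => i j; rewrite !inE => /eqP ci /eqP cj; apply: val_inj.
have : (m + (i : nat)%:Z == m + (j : nat)%:Z %[mod d])%Z by rewrite ci cj.
by rewrite eqz_modDl !modz_nat !modn_small // => /eqP [].
Qed.

Definition word_of_letters (q k : nat) (f : {ffun 'I_k -> 'I_q}) : seq nat :=
  [seq (f j : nat) | j <- enum 'I_k].

Lemma nth_word_of_letters q k (f : {ffun 'I_k -> 'I_q}) (j : 'I_k) :
  nth 0%N (word_of_letters f) j = f j.
Proof.
rewrite (nth_map j) ?size_enum_ord //.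
by congr (nat_of_ord (f _)); apply: val_inj; rewrite /= nth_enum_ord.
Qed.

Lemma nth_word_lt q I i : (0 < q)%N -> is_word q I -> (nth 0%N I i < q)%N.
Proof.
move=> q0 [_ /allP letters_lt]; case: (ltnP i (size I)) => Hi.
  exact: letters_lt _ (mem_nth 0%N Hi).
by rewrite nth_default.
Qed.

Theorem lemma2p3 (p q : nat) (tau : seq nat -> int) :
  (2 <= q)%N -> (q < p)%N -> regular_mapping p q tau ->
  forall (m : int) (k : nat),
    (#|[set i : 'I_(p ^ k) | `[< Lambda p q tau (m + (i : nat)%:Z) >] ]| <= q ^ k)%N.
Proof.
move=> q2 _ _ m k; have q0 : (0 < q)%N by lia.
pose residue_class (f : {ffun 'I_k -> 'I_q}) :=
  [set i : 'I_(p ^ k) |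
    (m + (i : nat)%:Z == tau_partial p tau (word_of_letters f) k %[mod (p ^ k)%N])%Z].
have covered : [set i : 'I_(p ^ k) | `[< Lambda p q tau (m + (i : nat)%:Z) >] ]
    \subset \bigcup_(f : {ffun 'I_k -> 'I_q}) residue_class f.
  apply/subsetP => i; rewrite inE => /asboolP [I [wordI starI]].
  apply/bigcupP; exists [ffun j : 'I_k => Ordinal (nth_word_lt j q0 wordI)] => //.
  rewrite inE; have -> : (p ^ k)%N%:Z = (p%:Z) ^+ k by rewrite -!natz natrX.
  rewrite (tau_star_is_mod k starI).
  rewrite (@eq_tau_partial _ _ _ I) // => j jk.
  by rewrite (nth_word_of_letters _ (Ordinal jk)) ffunE.
apply: leq_trans (subset_leq_card covered) _.
apply: leq_trans (leq_card_bigcup _ _) _.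
have -> : (q ^ k)%N = \sum_(f : {ffun 'I_k -> 'I_q}) 1%N.
  by rewrite sum1_card card_ffun !card_ord.
by apply: leq_sum => f _; apply: card_window_residue_le1.
Qed.
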